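(* Let $(\Lambda,d)$ be a finitely aligned $k$-graph. For $F,G\in S_\Lambda$ define $FG:=\bigcup_{(\lambda,\mu)\in F,(\xi,\eta)\in G}\{(\lambda\alpha,\eta\beta):(\alpha,\beta)\in\Lambda^{\min}(\mu,\xi)\}$. Then $FG\in S_\Lambda$, and this defines an associative multiplication on $S_\Lambda$.
   Context: A $k$-graph $(\Lambda,d)$ is a countable small category $\Lambda$ (objects identified with identity morphisms) with a functor $d:\Lambda\to\mathbb N^k$ satisfying unique factorization: whenever $d(\lambda)=m+n$ there are unique $\mu,\nu$ with $d(\mu)=m$, $d(\nu)=n$, $\lambda=\mu\nu$. $r,s$ are range/source. $\Lambda^{\min}(\lambda,\mu)=\{(\alpha,\beta):\lambda\alpha=\mu\beta,\ d(\lambda\alpha)=d(\lambda)\vee d(\mu)\}$ ($\vee$ = coordinatewise max); $\Lambda$ is finitely aligned if all $\Lambda^{\min}(\lambda,\mu)$ are finite. $\Lambda*_s\Lambda=\{(\lambda,\mu)\in\Lambda\times\Lambda:s(\lambda)=s(\mu)\}$. $S_\Lambda$ is the collection of all finite subsets $F\subseteq\Lambda*_s\Lambda$ such that for distinct $(\lambda,\mu),(\nu,\omega)\in F$ we have $\Lambda^{\min}(\lambda,\nu)=\emptyset$ and $\Lambda^{\min}(\mu,\omega)=\emptyset$ (the empty set belongs to $S_\Lambda$). *)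

From mathcomp Require Import all_boot.
Set Implicit Arguments. Unset Strict Implicit. Unset Printing Implicit Defensive.

Definition deg_add (k : nat) (m n : {ffun 'I_k -> nat}) : {ffun 'I_k -> nat} :=
  [ffun i => m i + n i].
Definition deg_join (k : nat) (m n : {ffun 'I_k -> nat}) : {ffun 'I_k -> nat} :=
  [ffun i => maxn (m i) (n i)].
Definition deg_zero (k : nat) : {ffun 'I_k -> nat} := [ffun _ => 0].

(* Composition comp f g (written fg, "f after g") is a total function but is
   only meaningful (and only constrained) when src f = rng g. *)
Record kgraph (k : nat) := KGraph {
  Obj : countType;
  Mor : countType;
  src : Mor -> Obj;
  rng : Mor -> Obj;
  idm : Obj -> Mor;
  comp : Mor -> Mor -> Mor;
  deg : Mor -> {ffun 'I_k -> nat};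
  src_idm : forall v, src (idm v) = v;
  rng_idm : forall v, rng (idm v) = v;
  src_comp : forall f g, src f = rng g -> src (comp f g) = src g;
  rng_comp : forall f g, src f = rng g -> rng (comp f g) = rng f;
  comp_idl : forall f, comp (idm (rng f)) f = f;
  comp_idr : forall f, comp f (idm (src f)) = f;
  comp_assoc : forall f g h, src f = rng g -> src g = rng h ->
    comp f (comp g h) = comp (comp f g) h;
  deg_idm : forall v, deg (idm v) = deg_zero k;
  deg_comp : forall f g, src f = rng g -> deg (comp f g) = deg_add (deg f) (deg g);
  unique_factorization : forall (l : Mor) (m n : {ffun 'I_k -> nat}),
    deg l = deg_add m n ->
    exists! p : Mor * Mor,
      src p.1 = rng p.2 /\ deg p.1 = m /\ deg p.2 = n /\ l = comp p.1 p.2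
}.

Section KGraphDefs.
Variables (k : nat) (L : kgraph k).

Definition pairset := (Mor L * Mor L)%type -> Prop.

Definition finite_pairset (P : pairset) : Prop :=
  exists s : seq (Mor L * Mor L), forall x, P x <-> x \in s.

Definition Lmin (l m : Mor L) : pairset := fun p =>
  src l = rng p.1 /\ src m = rng p.2 /\
  comp l p.1 = comp m p.2 /\
  deg (comp l p.1) = deg_join (deg l) (deg m).

Definition finitely_aligned : Prop :=
  forall l m : Mor L, finite_pairset (Lmin l m).

Definition S_Lambda (F : pairset) : Prop :=
  finite_pairset F /\
  (forall p, F p -> src p.1 = src p.2) /\
  (forall p q, F p -> F q -> p <> q ->
     (forall x, ~ Lmin p.1 q.1 x) /\ (forall x, ~ Lmin p.2 q.2 x)).

Definition S_mul (F G : pairset) : pairset := fun x =>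
  exists p q a, F p /\ G q /\ Lmin p.2 q.1 a /\
    x = (comp p.1 a.1, comp q.2 a.2).

End KGraphDefs.

(* A common extension l x = m y of l and m factors uniquely as (l a) c = (m b) c
   with (a, b) in Lmin(l, m): cut x and y at the degree d(l) \/ d(m) and use
   unique factorization. So if the first components l a and l' a' of two
   elements of FG have a common extension, then so do l and l', hence the
   factors taken from F coincide; then so do xi and xi', hence the factors
   taken from G coincide, and finally (a, b) = (a', b'). Regrouping a minimal
   common extension of m and xi followed by one of eta b and rho as one of eta
   and rho followed by one of m and xi g gives associativity. Transposing all
   pairs reverses the product, which yields the statements about second
   components and the reverse inclusion for free. *)

From mathcomp Require Import all_boot zify.
From Stdlib Require Import FunctionalExtensionality PropExtensionality.
Set Implicit Arguments. Unset Strict Implicit. Unset Printing Implicit Defensive.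

Section KGraphFactorization.
Variables (k : nat) (L : kgraph k).
Implicit Types f g h l m x y a b c d : Mor L.

Lemma deg_ext (m n : {ffun 'I_k -> nat}) : (forall i : 'I_k, m i = n i) -> m = n.
Proof. by move=> e; apply/ffunP. Qed.

Lemma deg_compE f g i : src f = rng g -> deg (comp f g) i = deg f i + deg g i.
Proof. by move=> fg; rewrite deg_comp // ffunE. Qed.

Lemma deg_comp_eq f g f' g' i : src f = rng g -> src f' = rng g' ->
  comp f g = comp f' g' -> deg f i + deg g i = deg f' i + deg g' i.
Proof. by move=> fg fg' e; rewrite -!deg_compE // e. Qed.

Lemma comp_factor_unique f g f' g' : src f = rng g -> src f' = rng g' ->
  comp f g = comp f' g' -> deg f = deg f' -> f = f' /\ g = g'.
Proof.
move=> fg fg' e df.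
have dg : deg g = deg g'.
  by apply: deg_ext => i; have := deg_comp_eq i fg fg' e; rewrite df; lia.
have [p [_ uniq_p]] := unique_factorization (deg_comp fg).
have := uniq_p (f', g') (conj fg' (conj (esym df) (conj (esym dg) e))).
by rewrite (uniq_p (f, g) (conj fg (conj erefl (conj erefl erefl)))) => -[].
Qed.

Lemma comp_cancel_l f g g' : src f = rng g -> src f = rng g' ->
  comp f g = comp f g' -> g = g'.
Proof. by move=> fg fg' e; case: (comp_factor_unique fg fg' e erefl). Qed.

Lemma factor_at_deg g h (n : {ffun 'I_k -> nat}) : src g = rng h ->
  (forall i, deg g i <= n i <= deg g i + deg h i) ->
  exists a b, [/\ src g = rng a, src a = rng b, h = comp a b & deg (comp g a) = n].
Proof.
move=> gh bounds.
have E : deg h = deg_add [ffun i => n i - deg g i] [ffun i => deg h i - (n i - deg g i)].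
  by apply: deg_ext => i; rewrite !ffunE; have := bounds i; lia.
have [[a b] [[/= ab [da [_ hab]]] _]] := unique_factorization E.
have ga : src g = rng a by rewrite gh hab rng_comp.
exists a, b; split => //; apply: deg_ext => i.
by rewrite deg_compE // da ffunE; have := bounds i; lia.
Qed.

Lemma LminP l m a b : Lmin l m (a, b) <->
  [/\ src l = rng a, src m = rng b, comp l a = comp m b
    & forall i, deg l i + deg a i = maxn (deg l i) (deg m i)].
Proof.
split=> [[/= la [mb [e dl]]] | [la mb e dl]].
  by split=> // i; rewrite -deg_compE // dl ffunE.
by split=> //; split=> //; split=> //; apply: deg_ext => i; rewrite deg_compE // dl ffunE.
Qed.

Lemma Lmin_factor l m x y : src l = rng x -> src m = rng y -> comp l x = comp m y ->
  exists a b c, [/\ Lmin l m (a, b), src a = rng c, x = comp a c & y = comp b c].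
Proof.
move=> lx my e; set n := deg_join (deg l) (deg m).
have D i := deg_comp_eq i lx my e.
have [a [c [la ac xac dla]]] := @factor_at_deg l x n lx
  (fun i => ltac:(rewrite ffunE; have := D i; lia)).
have [b [c' [mb bc' ybc dmb]]] := @factor_at_deg m y n my
  (fun i => ltac:(rewrite ffunE; have := D i; lia)).
have [lamb e2] : comp l a = comp m b /\ c = c'.
  apply: comp_factor_unique; rewrite ?src_comp ?dla ?dmb //.
  by rewrite -!comp_assoc // -xac -ybc.
by exists a, b, c; split; rewrite // ybc -e2.
Qed.

Lemma Lmin_src l m a b : Lmin l m (a, b) -> src a = src b.
Proof. by case/LminP=> la mb e _; rewrite -(src_comp la) e src_comp. Qed.

Lemma Lmin_sym l m a b : Lmin l m (a, b) -> Lmin m l (b, a).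
Proof.
case/LminP=> la mb e dl; apply/LminP; split=> // i.
by have := deg_comp_eq i la mb e; have := dl i; lia.
Qed.

Lemma Lmin_eq l m p q x y : Lmin l m p -> Lmin l m q ->
  src p.1 = rng x -> src q.1 = rng y -> comp p.1 x = comp q.1 y -> p = q.
Proof.
case: p q => [a b] [a' b'] /LminP[la mb e dl] /LminP[la' mb' e' dl'] /= ax ay eaa.
have da : deg a = deg a' by apply: deg_ext => i; have := dl i; have := dl' i; lia.
have [ea _] := comp_factor_unique ax ay eaa da; subst a'.
by rewrite (comp_cancel_l mb mb' (_ : comp m b = comp m b')) // -e -e'.
Qed.

Lemma Lmin_paste m xi eta rho a b c d : src xi = src eta ->
  Lmin m xi (a, b) -> Lmin (comp eta b) rho (c, d) ->
  exists g d' c', [/\ Lmin eta rho (g, d'), Lmin m (comp xi g) (comp a c, c'),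
                      src g = rng c' & d = comp d' c'].
Proof.
move=> se mab /LminP[ebc rd ecd dcd]; have /LminP[ma xb eab dab] := mab.
have eb : src eta = rng b by rewrite -se.
rewrite src_comp // in ebc.
have [g [d' [c' [mgd gc' bc ->]]]] :=
  @Lmin_factor eta rho (comp b c) d ltac:(by rewrite rng_comp) rd
    ltac:(by rewrite comp_assoc).
have /LminP[eg _ _ dgd] := mgd.
have xg : src xi = rng g by rewrite se.
have ac : src a = rng c by rewrite (Lmin_src mab).
exists g, d', c'; split => //; apply/LminP; split; rewrite ?rng_comp ?src_comp //.
  by rewrite comp_assoc // eab -comp_assoc // bc comp_assoc.
move=> i; rewrite !deg_compE //.
have := dab i; have := dcd i; have := dgd i; have := deg_comp_eq i ma xb eab.
by rewrite !deg_compE //; lia.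
Qed.

End KGraphFactorization.

Definition finite_pred (T : eqType) (P : T -> Prop) :=
  exists s : seq T, forall x, P x <-> x \in s.

Lemma finite_pred_ext (T : eqType) (P Q : T -> Prop) :
  (forall x, P x <-> Q x) -> finite_pred P -> finite_pred Q.
Proof. by move=> PQ [s Ps]; exists s => x; rewrite -PQ. Qed.

Lemma finite_pred1 (T : eqType) (y : T) : finite_pred (fun x => x = y).
Proof. by exists [:: y] => x; rewrite mem_seq1; split=> [-> | /eqP]. Qed.

Lemma finite_pred_bind (A T : eqType) (P : A -> Prop) (Q : A -> T -> Prop) :
  finite_pred P -> (forall a, P a -> finite_pred (Q a)) ->
  finite_pred (fun x => exists2 a, P a & Q a x).
Proof.
case=> s Ps finQ; apply: (@finite_pred_ext _ (fun x => exists2 a, a \in s & Q a x)).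
  by move=> x; split=> -[a aP Qa]; exists a => //; apply/Ps.
have {Ps finQ}: forall a, a \in s -> finite_pred (Q a) by move=> a /Ps /finQ.
elim: s => [_ | a s IH finQs]; first by exists [::] => x; split=> // -[].
have [t1 Qa_t1] := finQs a (mem_head a s).
have [t2 Qs_t2] := IH (fun b bs => finQs b (mem_behead (s := a :: s) bs)).
exists (t1 ++ t2) => x; rewrite mem_cat; split.
  case=> b; rewrite in_cons => /orP[/eqP-> /Qa_t1-> // | bs Qb].
  by apply/orP; right; apply/Qs_t2; exists b.
case/orP=> [/Qa_t1 Qax | /Qs_t2[b bs Qb]]; first by exists a; rewrite ?mem_head.
by exists b; rewrite // in_cons bs orbT.
Qed.

Section ProductOfSLambda.
Variables (k : nat) (L : kgraph k).
Implicit Types F G H : pairset L.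

Definition src_balanced F := forall p, F p -> src p.1 = src p.2.

Definition fst_disjoint F :=
  forall p q, F p -> F q -> p <> q -> forall x, ~ Lmin p.1 q.1 x.

Definition transpose F : pairset L := fun p => F (p.2, p.1).

Lemma S_LambdaP F : S_Lambda F <->
  [/\ finite_pairset F, src_balanced F, fst_disjoint F & fst_disjoint (transpose F)].
Proof.
split=> [[finF [bF disjF]] | [finF bF dF dFt]].
  split=> // [p q Fp Fq pq | [a b] [a' b'] Fp Fq pq]; first exact: (disjF p q Fp Fq pq).1.
  have ba : (b, a) <> (b', a') by case=> eb ea; apply: pq; rewrite ea eb.
  exact: (disjF _ _ Fp Fq ba).2.
split=> //; split=> // -[a b] [a' b'] Fp Fq pq; split; first exact: dF.
by apply: (dFt (b, a) (b', a')) => // -[eb ea]; apply: pq; rewrite ea eb.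
Qed.

Lemma src_balanced_transpose F : src_balanced F -> src_balanced (transpose F).
Proof. by move=> bF [a b] /bF. Qed.

Lemma pairset_ext F G : (forall x, F x <-> G x) -> F = G.
Proof.
by move=> FG; apply: functional_extensionality => x; apply: propositional_extensionality.
Qed.

Lemma S_mul_transpose F G : transpose (S_mul F G) = S_mul (transpose G) (transpose F).
Proof.
apply: pairset_ext => -[x1 x2].
by split=> -[[l m] [[xi eta] [[a b] [Fp [Gq [/Lmin_sym mba [-> ->]]]]]]];
  exists (eta, xi), (m, l), (b, a).
Qed.

Lemma finite_S_mul F G : finitely_aligned L ->
  finite_pairset F -> finite_pairset G -> finite_pairset (S_mul F G).
Proof.
move=> fa finF finG.
apply: (finite_pred_ext _ (finite_pred_bind finF (fun p _ =>
          finite_pred_bind finG (fun q _ =>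
            finite_pred_bind (fa p.2 q.1) (fun a _ => finite_pred1 _))))).
move=> x; split=> [[p Fp [q Gq [a mpq ->]]] | [p [q [a [Fp [Gq [mpq ->]]]]]]].
  by exists p, q, a.
by exists p => //; exists q => //; exists a.
Qed.

Lemma src_balanced_S_mul F G :
  src_balanced F -> src_balanced G -> src_balanced (S_mul F G).
Proof.
move=> bF bG _ [[l m] [[xi eta] [[a b] [Fp [Gq [/LminP[ma xib e _] ->]]]]]] /=.
have la : src l = rng a by rewrite (bF _ Fp).
have etab : src eta = rng b by rewrite -(bG _ Gq).
by rewrite !src_comp // -(src_comp ma) e src_comp.
Qed.

Lemma fst_disjoint_eq F p q x y : fst_disjoint F -> F p -> F q ->
  src p.1 = rng x -> src q.1 = rng y -> comp p.1 x = comp q.1 y -> p = q.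
Proof.
move=> dF Fp Fq px qy e; case: (p =P q) => // pq.
have [a [b [_ [mab _ _ _]]]] := Lmin_factor px qy e.
by case: (dF p q Fp Fq pq (a, b)).
Qed.

Lemma fst_disjoint_S_mul F G : src_balanced F -> src_balanced G ->
  fst_disjoint F -> fst_disjoint G -> fst_disjoint (S_mul F G).
Proof.
move=> bF bG dF dG _ _ [[l m] [[xi eta] [[a b] [Fp [Gq [mab ->]]]]]]
  [[l' m'] [[xi' eta'] [[a' b'] [Fp' [Gq' [mab' ->]]]]]] /= nxy [c c'].
case/LminP=> /= lac lac' e _; rewrite /= in mab mab'.
have la : src l = rng a by rewrite (bF _ Fp); case/LminP: mab.
have la' : src l' = rng a' by rewrite (bF _ Fp'); case/LminP: mab'.
rewrite src_comp // in lac; rewrite src_comp // in lac'.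
have [el em] : (l, m) = (l', m').
  by apply: (fst_disjoint_eq dF Fp Fp' (x := comp a c) (y := comp a' c'));
    rewrite /= ?rng_comp // !comp_assoc.
subst l' m'.
have eac : comp a c = comp a' c'.
  by apply: (comp_cancel_l (f := l)); rewrite ?rng_comp // !comp_assoc.
have bc : src b = rng c by rewrite -(Lmin_src mab).
have bc' : src b' = rng c' by rewrite -(Lmin_src mab').
have /LminP[ma xib eab _] := mab; have /LminP[ma' xib' eab' _] := mab'.
have [exi eeta] : (xi, eta) = (xi', eta').
  apply: (fst_disjoint_eq dG Gq Gq' (x := comp b c) (y := comp b' c'));
    rewrite /= ?rng_comp //.
  by rewrite !comp_assoc // -eab -eab' -!comp_assoc // eac.
subst xi' eta'.
have [ea eb] : (a, b) = (a', b') := Lmin_eq mab mab' lac lac' eac.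
by apply: nxy; rewrite ea eb.
Qed.

Lemma S_Lambda_S_mul F G : finitely_aligned L ->
  S_Lambda F -> S_Lambda G -> S_Lambda (S_mul F G).
Proof.
move=> fa /S_LambdaP[finF bF dF dFt] /S_LambdaP[finG bG dG dGt].
apply/S_LambdaP; split; first exact: finite_S_mul.
- exact: src_balanced_S_mul.
- exact: fst_disjoint_S_mul.
rewrite S_mul_transpose.
by apply: fst_disjoint_S_mul => //; apply: src_balanced_transpose.
Qed.

Lemma S_mul_assoc_sub F G H : src_balanced F -> src_balanced G -> src_balanced H ->
  forall x, S_mul (S_mul F G) H x -> S_mul F (S_mul G H) x.
Proof.
move=> bF bG bH _ [_ [[rho sig] [[c d]
  [[[l m] [[xi eta] [[a b] [Fp [Gq [mab ->]]]]]] [Hr [mcd ->]]]]]].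
rewrite /= in mab mcd.
have [g [d' [c' [mgd mac gc' ->]]]] := Lmin_paste (bG _ Gq) mab mcd.
exists (l, m), (comp xi g, comp sig d'), (comp a c, c'); split => //; split.
  by exists (xi, eta), (rho, sig), (g, d').
split => //=.
have /LminP[ma xb _ _] := mab; have /LminP[ebc _ _ _] := mcd.
have /LminP[_ rd' _ _] := mgd.
have la : src l = rng a by rewrite (bF _ Fp).
have ac : src a = rng c by rewrite (Lmin_src mab) -(src_comp (f := eta)) // -(bG _ Gq).
have sd' : src sig = rng d' by rewrite -(bH _ Hr).
have dc' : src d' = rng c' by rewrite -(Lmin_src mgd).
by rewrite !comp_assoc.
Qed.

Lemma S_mul_assoc F G H : src_balanced F -> src_balanced G -> src_balanced H ->
  S_mul (S_mul F G) H = S_mul F (S_mul G H).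
Proof.
move=> bF bG bH; apply: pairset_ext => -[x1 x2]; split; first exact: S_mul_assoc_sub.
(* Transposition reverses products, so the reverse inclusion is the forward
   one for the transposed sets. *)
move=> FGHx; have : transpose (S_mul F (S_mul G H)) (x2, x1) by [].
rewrite !S_mul_transpose => /S_mul_assoc_sub.
by rewrite -!S_mul_transpose; apply; apply: src_balanced_transpose.
Qed.

End ProductOfSLambda.

Theorem proposition4p3 (k : nat) (L : kgraph k) :
  finitely_aligned L ->
  (forall F G : pairset L, S_Lambda F -> S_Lambda G -> S_Lambda (S_mul F G)) /\
  (forall F G H : pairset L, S_Lambda F -> S_Lambda G -> S_Lambda H ->
     S_mul (S_mul F G) H = S_mul F (S_mul G H)).
Proof.
move=> fa; split=> [F G | F G H]; first exact: S_Lambda_S_mul.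
by move=> /S_LambdaP[_ bF _ _] /S_LambdaP[_ bG _ _] /S_LambdaP[_ bH _ _]; apply: S_mul_assoc.
Qed.
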